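(* Let $G$ be a finitely generated group and let $F=(F_n)_{n=1}^\infty$ be a sequence of finite subsets of $G$ that is both left- and right-Følner. Then \[\frac{|\{C\in\mathcal{C}(G):C\cap F_n\ne\varnothing\text{ and }C\not\subset F_n\}|}{|F_n|}\to0\] as $n\to\infty$. In particular, $\textup{cr}_F(G)=\limsup_{n\to\infty}\frac{|\{C\in\mathcal{C}(G):C\subset F_n\}|}{|F_n|}$.
   Context: $\mathcal{C}(G)$ is the set of conjugacy classes of $G$. $F$ is left-Følner if $|xF_n\triangle F_n|/|F_n|\to0$ for every $x\in G$, right-Følner if $|F_nx\triangle F_n|/|F_n|\to0$ for every $x\in G$. $\textup{cr}_F(G)=\limsup_{n\to\infty}\frac{|\{C\in\mathcal{C}(G):C\cap F_n\ne\varnothing\}|}{|F_n|}$. *)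

From HB Require Import structures.
From mathcomp Require Import all_boot all_order all_algebra.
From mathcomp Require Import finmap.
From mathcomp Require Import all_classical all_reals all_analysis.
Set Implicit Arguments. Unset Strict Implicit. Unset Printing Implicit Defensive.
Import Order.TTheory GRing.Theory Num.Theory.
Import numFieldNormedType.Exports.
Local Open Scope classical_set_scope.
Local Open Scope fset_scope.

Record group_laws (G : Type) (mul : G -> G -> G) (inv : G -> G) (one : G) : Prop := {
  gl_assoc : forall x y z, mul x (mul y z) = mul (mul x y) z;
  gl_mul1g : forall x, mul one x = x;
  gl_mulg1 : forall x, mul x one = x;
  gl_mulVg : forall x, mul (inv x) x = one;
  gl_mulgV : forall x, mul x (inv x) = one }.

Definition finitely_generated (G : choiceType) (mul : G -> G -> G) (inv : G -> G)
  (one : G) : Prop :=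
  exists S : seq G, forall g : G, exists w : seq G,
    (forall s, s \in w -> (s \in S) || (inv s \in S)) /\
    g = foldr mul one w.

Definition ltrans (G : choiceType) (mul : G -> G -> G) (x : G) (F : {fset G}) :
  {fset G} := [fset mul x y | y in F].
Definition rtrans (G : choiceType) (mul : G -> G -> G) (F : {fset G}) (x : G) :
  {fset G} := [fset mul y x | y in F].

Definition fsymdiff (G : choiceType) (A B : {fset G}) : {fset G} :=
  fsetU (fsetD A B) (fsetD B A).

Section Folner.
Context (R : realType) (G : choiceType) (mul : G -> G -> G).
Local Open Scope ring_scope.

Definition left_Folner (F : nat -> {fset G}) : Prop :=
  forall x : G, (fun n => (#|` fsymdiff (ltrans mul x (F n)) (F n)|%:R
                           / #|` F n|%:R : R)) @ \oo --> 0.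

Definition right_Folner (F : nat -> {fset G}) : Prop :=
  forall x : G, (fun n => (#|` fsymdiff (rtrans mul (F n) x) (F n)|%:R
                           / #|` F n|%:R : R)) @ \oo --> 0.
End Folner.

(* cardinality of a (finite) classical set; 0 if infinite *)
Definition fcard_set (T : choiceType) (A : set T) : nat := #|` fset_set A|.

Local Close Scope fset_scope.
Local Open Scope classical_set_scope.

Definition conj_class (G : Type) (mul : G -> G -> G) (inv : G -> G) (x : G) : set G :=
  [set mul (inv g) (mul x g) | g in setT].

Definition conj_classes (G : Type) (mul : G -> G -> G) (inv : G -> G) : set (set G) :=
  [set C | exists x, C = conj_class mul inv x].

Definition n_classes_meeting (G : choiceType) mul inv (F : {fset G}) : nat :=
  fcard_set ( [set C | conj_classes mul inv C /\ (C `&` [set x | x \in F] !=set0)]).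

Definition n_classes_boundary (G : choiceType) mul inv (F : {fset G}) : nat :=
  fcard_set ( [set C | conj_classes mul inv C /\ (C `&` [set x | x \in F] !=set0)
                        /\ ~ (C `<=` [set x | x \in F])]).

Definition n_classes_inside (G : choiceType) mul inv (F : {fset G}) : nat :=
  fcard_set ( [set C | conj_classes mul inv C /\ C `<=` [set x | x \in F]]).

Definition cr (R : realType) (G : choiceType) mul inv (F : nat -> {fset G}) : R :=
  limn_sup (fun n => ((n_classes_meeting mul inv (F n))%:R / #|` F n|%:R)%R).

From HB Require Import structures.
From mathcomp Require Import all_boot all_order all_algebra.
From mathcomp Require Import finmap.
From mathcomp Require Import all_classical all_reals all_analysis.
Import Order.TTheory GRing.Theory Num.Theory.
Import numFieldNormedType.Exports.
Local Open Scope classical_set_scope.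
Set Implicit Arguments. Unset Strict Implicit. Unset Printing Implicit Defensive.

(* Let T be a finite generating set of G closed under inverses.  If a class C
   meets F without being contained in F, walk inside C from a point of C in F
   to a point of C outside F, conjugating by one letter of T at a time: some
   step leaves F, i.e. C contains y in F and s in T with s^-1 y s outside F.
   Then y lies in F \ sF or in s (F \ F s^-1), so picking such a y for every
   boundary class bounds their number by
   sum_(s in T) (|sF triangle F| + |F s^-1 triangle F|), which is o(|F_n|)
   for a two-sided Folner sequence.  The limsup identity follows because the
   classes meeting F_n are those inside F_n plus the boundary ones. *)

Lemma fcard_set_le_image (T T' : choiceType) (f : T -> T') (A : set T')
    (B : {fset T}) :
  A `<=` f @` [set` B] -> (fcard_set A <= #|` B|)%N.
Proof.
move=> AB; have fin_fB : finite_set (f @` [set` B]).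
  exact/finite_image/finite_fset.
rewrite /fcard_set; apply: (@leq_trans #|` fset_set (f @` [set` B])|).
  by apply: fsubset_leq_card; rewrite -fset_set_sub //; exact: sub_finite_set AB _.
by rewrite fset_set_image ?finite_fset // set_fsetK; exact: leq_imfset_card.
Qed.

Lemma fcard_setU (T : choiceType) (A B : set T) :
  finite_set A -> finite_set B -> A `&` B = set0 ->
  fcard_set (A `|` B) = (fcard_set A + fcard_set B)%N.
Proof.
move=> finA finB AB0; rewrite /fcard_set fset_setU //.
by rewrite -cardfsUI -fset_setI // AB0 fset_set0 cardfs0 addn0.
Qed.

Lemma card_bigfcup_le (I : Type) (T : choiceType) (r : seq I)
    (A : I -> {fset T}) :
  (#|` \bigcup_(i <- r) A i| <= \sum_(i <- r) #|` A i|)%fset%N.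
Proof.
elim: r => [|i r IHr]; first by rewrite !big_nil cardfs0.
rewrite !big_cons; exact: leq_trans (leq_card_fsetU _ _).1 (leq_add (leqnn _) IHr).
Qed.

Section Conjugation.
Variables (G : choiceType) (mul : G -> G -> G) (inv : G -> G) (one : G).
Hypothesis HG : group_laws mul inv one.

Let mulgA := gl_assoc HG.
Let mul1g := gl_mul1g HG.
Let mulg1 := gl_mulg1 HG.
Let mulVg := gl_mulVg HG.
Let mulgV := gl_mulgV HG.

Lemma gmulKg x y : mul (inv x) (mul x y) = y.
Proof. by rewrite mulgA mulVg mul1g. Qed.

Lemma gmulKVg x y : mul x (mul (inv x) y) = y.
Proof. by rewrite mulgA mulgV mul1g. Qed.

Lemma ginvMg x y : inv (mul x y) = mul (inv y) (inv x).
Proof.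
have xyK : mul (mul x y) (mul (inv y) (inv x)) = one.
  by rewrite -mulgA (mulgA y) mulgV mul1g mulgV.
by rewrite -[RHS](gmulKg (mul x y)) xyK mulg1.
Qed.

Lemma ginvgK x : inv (inv x) = x.
Proof. by rewrite -[RHS](gmulKg (inv x)) mulVg mulg1. Qed.

Lemma ginv1 : inv one = one.
Proof. by rewrite -[LHS]mulg1 mulVg. Qed.

Definition gconj (y g : G) : G := mul (inv g) (mul y g).

Lemma gconjM y g h : gconj (gconj y g) h = gconj y (mul g h).
Proof. by rewrite /gconj ginvMg !mulgA. Qed.

Lemma gconj1 y : gconj y one = y.
Proof. by rewrite /gconj ginv1 mul1g mulg1. Qed.

Lemma conj_classP x y : conj_class mul inv x y <-> exists g, y = gconj x g.
Proof. by split=> [[g _ <-]|[g ->]]; exists g. Qed.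

Lemma conj_class_refl x : conj_class mul inv x x.
Proof. by apply/conj_classP; exists one; rewrite gconj1. Qed.

Lemma conj_class_eq x y :
  conj_class mul inv x y -> conj_class mul inv y = conj_class mul inv x.
Proof.
case/conj_classP=> g ->; apply/seteqP; split=> z /conj_classP[h ->];
  apply/conj_classP.
  by exists (mul g h); rewrite gconjM.
by exists (mul (inv g) h); rewrite gconjM gmulKVg.
Qed.

Lemma exit_along_word (F : {fset G}) (T w : seq G) c :
  {subset w <= T} -> c \in F -> gconj c (foldr mul one w) \notin F ->
  exists y s, [/\ s \in T, y \in F, gconj y s \notin F & conj_class mul inv c y].
Proof.
elim: w c => [|s w IHw] c wT cF /=; first by rewrite gconj1 cF.
rewrite -gconjM => cswF; have sT : s \in T by apply: wT; rewrite inE eqxx.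
have [csF|csF] := boolP (gconj c s \in F); last first.
  by exists c, s; split=> //; exact: conj_class_refl.
have [|y [t [tT yF ytF csy]]] := IHw _ _ csF cswF.
  by move=> t tw; apply: wT; rewrite inE tw orbT.
exists y, t; split=> //; rewrite -(@conj_class_eq c (gconj c s)) //.
by apply/conj_classP; exists s.
Qed.

Local Open Scope fset_scope.

(* Every y in F with s^-1 y s outside F lies here, according as s^-1 y is
   outside F or in F \ F s^-1. *)
Definition exit_set (s : G) (F : {fset G}) : {fset G} :=
  (F `\` ltrans mul s F) `|` ltrans mul s (F `\` rtrans mul F (inv s)).

Definition folner_defect (s : G) (F : {fset G}) : nat :=
  #|` fsymdiff (ltrans mul s F) F| + #|` fsymdiff (rtrans mul F (inv s)) F|.

Lemma mem_exit_set (F : {fset G}) s y :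
  y \in F -> gconj y s \notin F -> y \in exit_set s F.
Proof.
move=> yF ysF; rewrite in_fsetU; have [syF|syF] := boolP (mul (inv s) y \in F).
  apply/orP; right; rewrite -(gmulKVg s y); apply: in_imfset => /=.
  rewrite in_fsetD syF andbT; apply/imfsetP=> -[z /= zF syE].
  by move: ysF; rewrite /gconj mulgA syE -mulgA mulVg mulg1 zF.
apply/orP; left; rewrite in_fsetD yF andbT; apply/imfsetP=> -[z /= zF yE].
by move: syF; rewrite yE gmulKg zF.
Qed.

Lemma card_exit_set s F : (#|` exit_set s F| <= folner_defect s F)%N.
Proof.
apply: leq_trans (leq_card_fsetU _ _).1 _; apply: leq_add.
  by apply: fsubset_leq_card; rewrite fsubsetUr.
apply: leq_trans (leq_imfset_card _ _ _) _.
by apply: fsubset_leq_card; rewrite fsubsetUr.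
Qed.

Local Close Scope fset_scope.

Definition generates_monoid (T : seq G) : Prop :=
  forall g, exists2 w : seq G, {subset w <= T} & g = foldr mul one w.

Lemma finitely_generated_monoid :
  finitely_generated mul inv one -> exists T, generates_monoid T.
Proof.
case=> S genS; exists (S ++ map inv S) => g.
have [w [wS ->]] := genS g; exists w => // s /wS /orP[sS|isS].
  by rewrite mem_cat sS.
by rewrite mem_cat; apply/orP; right; apply/mapP; exists (inv s); rewrite ?ginvgK.
Qed.

Lemma boundary_classes_sub (T : seq G) (F : {fset G}) : generates_monoid T ->
  [set C | conj_classes mul inv C /\ (C `&` [set x | x \in F] !=set0)
           /\ ~ (C `<=` [set x | x \in F])]
  `<=` conj_class mul inv @` [set` (\bigcup_(s <- T) exit_set s F)%fset].
Proof.
move=> genT C [[x ->] [[c [xc cF]] xF]].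
have [d [xd dF]] : exists d, conj_class mul inv x d /\ d \notin F.
  apply: contra_notP xF => noexit z xz /=.
  by apply/negPn/negP => zF; apply: noexit; exists z.
have [g cdg] : exists g, d = gconj c g by apply/conj_classP; rewrite (conj_class_eq xc).
have [w wT gw] := genT g.
have [|y [s [sT yF ysF cy]]] := exit_along_word wT cF; first by rewrite -gw -cdg.
exists y; last by rewrite (conj_class_eq cy) (conj_class_eq xc).
by apply/bigfcupP; exists s; rewrite ?sT //; exact: mem_exit_set.
Qed.

Lemma n_classes_boundary_le (T : seq G) (F : {fset G}) : generates_monoid T ->
  (n_classes_boundary mul inv F <= \sum_(s <- T) folner_defect s F)%N.
Proof.
move=> genT; rewrite /n_classes_boundary.
apply: leq_trans (fcard_set_le_image (@boundary_classes_sub T F genT)) _.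
apply: leq_trans (card_bigfcup_le _ _) _.
by apply: leq_sum => s _; exact: card_exit_set.
Qed.

Lemma inside_classes_sub (F : {fset G}) :
  [set C | conj_classes mul inv C /\ C `<=` [set x | x \in F]]
  `<=` conj_class mul inv @` [set` F].
Proof. by move=> C [[x ->] xF]; exists x => //; exact/xF/conj_class_refl. Qed.

Lemma meeting_classes_sub (F : {fset G}) :
  [set C | conj_classes mul inv C /\ (C `&` [set x | x \in F] !=set0)]
  `<=` conj_class mul inv @` [set` F].
Proof. by move=> C [[x ->] [c [xc cF]]]; exists c => //; rewrite (conj_class_eq xc). Qed.

Lemma n_classes_inside_le (F : {fset G}) :
  (n_classes_inside mul inv F <= #|` F|)%N.
Proof. exact/fcard_set_le_image/inside_classes_sub. Qed.

Lemma n_classes_meetingE (F : {fset G}) :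
  n_classes_meeting mul inv F =
  (n_classes_inside mul inv F + n_classes_boundary mul inv F)%N.
Proof.
have fin_classes : finite_set (conj_class mul inv @` [set` F]).
  exact/finite_image/finite_fset.
rewrite /n_classes_meeting -fcard_setU.
- congr fcard_set; apply/seteqP; split=> [C [CC CF]|C [[CC CF]|[CC [CF _]]]].
  + by have [|] := pselect (C `<=` [set x | x \in F]); [left|right].
  + split=> //; case: CC CF => x -> CF; exists x.
    by split; [exact: conj_class_refl | exact/CF/conj_class_refl].
  + by [].
- exact: sub_finite_set (@inside_classes_sub F) fin_classes.
- apply: sub_finite_set (sub_finite_set (@meeting_classes_sub F) fin_classes).
  by move=> C [CC [CF _]].
- by rewrite -subset0 => C [[_ CF] [_ [_ /(_ CF)]]].
Qed.

End Conjugation.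

Local Open Scope ring_scope.

Section RealSequences.
Variable R : realType.

Lemma bounded_fun_ratio (k m : nat -> nat) : (forall n, k n <= m n)%N ->
  bounded_fun ((fun n => (k n)%:R / (m n)%:R) : R^o^nat).
Proof.
move=> km; exists 1; split; first exact: num_real.
move=> M M1 n _ /=; rewrite ger0_norm ?divr_ge0 // (le_trans _ (ltW M1)) //.
have [->|m0] := posnP (m n); first by rewrite invr0 mulr0.
by rewrite ler_pdivrMr ?ltr0n // mul1r ler_nat.
Qed.

Lemma squeeze_ratio_cvg0 (k m d : nat -> nat) : (forall n, k n <= m n)%N ->
  (fun n => (m n)%:R / (d n)%:R : R) @ \oo --> 0 ->
  (fun n => (k n)%:R / (d n)%:R : R) @ \oo --> 0.
Proof.
move=> km; apply: squeeze_cvgr (cvg_cst 0); apply: nearW => n.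
by rewrite divr_ge0 //= ler_wpM2r ?invr_ge0 // ler_nat.
Qed.

Lemma cvg_sum0 (I : Type) (r : seq I) (u : I -> nat -> R) :
  (forall i, u i @ \oo --> 0) -> (fun n => \sum_(i <- r) u i n) @ \oo --> 0.
Proof.
move=> u0; rewrite -[X in _ --> X](big1 (op := +%R) r xpredT (fun=> 0)) //.
by apply: cvg_big => //; exact: add_continuous.
Qed.

Lemma limn_supD_cvg0 (u v : R^o^nat) : bounded_fun u -> v @ \oo --> 0 ->
  limn_sup (u \+ v) = limn_sup u.
Proof.
move=> bu v0; have bv : bounded_fun v by apply/cvg_seq_bounded/cvg_ex; exists 0.
apply/eqP; rewrite eq_le; apply/andP; split.
  by rewrite (le_trans (le_limn_supD bu bv)) // (cvg_limn_inf_sup v0).2 addr0.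
have -> : limn_sup u = limn_sup ((u \+ v) \+ (fun n => - v n)).
  by congr limn_sup; apply/funext => n /=; rewrite addrK.
rewrite (le_trans (le_limn_supD (bounded_funD bu bv) (bounded_funN bv))) //.
by rewrite (cvg_limn_inf_sup (cvgN v0)).2 oppr0 addr0.
Qed.

End RealSequences.

Lemma folner_defect_cvg0 (R : realType) (G : choiceType) (mul : G -> G -> G)
    (inv : G -> G) (F : nat -> {fset G}) (T : seq G) :
  left_Folner R mul F -> right_Folner R mul F ->
  (fun n => (\sum_(s <- T) folner_defect mul inv s (F n))%:R / #|` F n|%:R : R)
    @ \oo --> 0.
Proof.
move=> FL FR; under eq_fun do rewrite natr_sum mulr_suml.
apply: cvg_sum0 => s; rewrite -[0]addr0.
under eq_fun do rewrite natrD mulrDl.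
exact: cvgD (FL s) (FR (inv s)).
Qed.

Theorem proposition8p1 (R : realType) (G : choiceType)
  (mul : G -> G -> G) (inv : G -> G) (one : G)
  (HG : group_laws mul inv one)
  (Hfg : finitely_generated mul inv one)
  (F : nat -> {fset G})
  (HL : left_Folner R mul F) (HR : right_Folner R mul F) :
  ((fun n => (n_classes_boundary mul inv (F n))%:R / #|` F n|%:R : R)
     @ \oo --> 0) /\
  cr R mul inv F =
    limn_sup (fun n => (n_classes_inside mul inv (F n))%:R / #|` F n|%:R : R).
Proof.
have [T genT] := finitely_generated_monoid HG Hfg.
have boundary0 := squeeze_ratio_cvg0 (fun n => n_classes_boundary_le HG (F n) genT)
  (folner_defect_cvg0 inv T HL HR).
split=> //; rewrite /cr.
under eq_fun do rewrite (n_classes_meetingE HG) natrD mulrDl.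
apply: limn_supD_cvg0 boundary0.
by apply: bounded_fun_ratio => n; exact: (n_classes_inside_le HG (F n)).
Qed.
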